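(* Let $T$ be an array and let $s, n_1, n_2 \ge 0$ be integers such that positions $s,\dots,s+n_1-1$ of $T$ hold a list $A$ of $n_1$ distinct elements and positions $s+n_1,\dots,s+n_1+n_2-1$ hold a list $B$ of $n_2$ further distinct elements. Suppose $A$ and $B$ are randomly shuffled, i.e. each is in a uniformly random order, independently of each other and of the random bits and random integers drawn by the procedure. Then after running $\textsc{Merge}(T,s,n_1,n_2)$ (defined in the context), positions $s,\dots,s+n_1+n_2-1$ of $T$ hold a randomly shuffled union $C$ of $A$ and $B$, i.e. the $n=n_1+n_2$ elements in a uniformly random order.
   Context: The procedure $\textsc{Merge}(T,s,n_1,n_2)$: set $i\gets s$, $j\gets s+n_1$, $n\gets s+n_1+n_2$. Repeat: draw an independent fair random bit; if it is $0$, then break out of the loop if $i=j$; if it is $1$, then break out of the loop if $j=n$, and otherwise swap $T[i]$ and $T[j]$ and set $j\gets j+1$; in either non-breaking case set $i\gets i+1$. After the loop, while $i<n$: draw an integer $m$ uniformly at random from $\{s,\dots,i\}$ (independently of everything else), swap $T[i]$ and $T[m]$, and set $i\gets i+1$. *)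

From mathcomp Require Import all_boot all_order all_algebra.
Set Implicit Arguments. Unset Strict Implicit. Unset Printing Implicit Defensive.
Import GRing.Theory Num.Theory.
Local Open Scope ring_scope.

Definition dist (A : Type) := seq (rat * A).

Definition dret {A : Type} (x : A) : dist A := [:: (1, x)].

Definition dbind {A B : Type} (d : dist A) (f : A -> dist B) : dist B :=
  flatten [seq [seq (px.1 * qy.1, qy.2) | qy <- f px.2] | px <- d].

Definition prob {A : Type} (d : dist A) (P : A -> bool) : rat :=
  \sum_(px <- d | P px.2) px.1.

Definition unif_list {A : Type} (l : seq A) : dist A :=
  [seq (1 / (size l)%:R, x) | x <- l].

Definition flip : dist bool := unif_list [:: false; true].

Definition unif_range (lo hi : nat) : dist nat := unif_list (iota lo (hi - lo).+1).

Definition swap {X : Type} (T : nat -> X) (i j : nat) : nat -> X :=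
  fun k => if k == i then T j else if k == j then T i else T k.

Definition fill {X : Type} (T : nat -> X) (s : nat) (l : seq X) : nat -> X :=
  fun k => if (s <= k < s + size l)%N then nth (T k) l (k - s) else T k.

(* First loop of Merge; state (T, i, j); n is the end index s+n1+n2.
   [fuel] bounds the number of iterations; Merge supplies n1+n2+1, which is
   never exhausted since every non-breaking iteration increments i <= n. *)
Fixpoint merge_loop1 {X : Type} (fuel : nat) (n : nat) (T : nat -> X) (i j : nat)
  : dist ((nat -> X) * nat) :=
  match fuel with
  | 0 => dret (T, i)
  | fuel'.+1 =>
      dbind flip (fun b =>
        if ~~ b then
          (if i == j then dret (T, i) else merge_loop1 fuel' n T i.+1 j)
        else
          (if j == n then dret (T, i) else merge_loop1 fuel' n (swap T i j) i.+1 j.+1))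
  end.

(* Second loop: k = n - i remaining iterations; draw m uniformly in {s..i},
   swap T[i] and T[m], increment i. *)
Fixpoint merge_loop2 {X : Type} (k : nat) (s : nat) (T : nat -> X) (i : nat)
  : dist (nat -> X) :=
  match k with
  | 0 => dret T
  | k'.+1 => dbind (unif_range s i) (fun m => merge_loop2 k' s (swap T i m) i.+1)
  end.

Definition Merge {X : Type} (T : nat -> X) (s n1 n2 : nat) : dist (nat -> X) :=
  let n := (s + n1 + n2)%N in
  dbind (merge_loop1 (n1 + n2).+1 n T s (s + n1)%N)
        (fun Ti => merge_loop2 (n - Ti.2)%N s Ti.1 Ti.2).

Definition shuffled_merge {X : eqType} (T : nat -> X) (s : nat) (A B : seq X)
  : dist (nat -> X) :=
  dbind (unif_list (permutations A)) (fun a =>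
  dbind (unif_list (permutations B)) (fun b =>
  Merge (fill T s (a ++ b)) s (size A) (size B))).

(* Regard the merged array as [fill T s c] for an arrangement [c] of [A ++ B],
   and write [t] and [j] for the two cursors of the first loop minus [s].
   Give weight one to every pair [(c, j)] such that [c] holds elements of [A]
   on [t <= k < j] and elements of [B] from [j] on.  One iteration of the
   first loop turns this weight at [t] into half of the weight of the states
   leaving the loop at [i = j], half of those leaving at [j = n], and the
   weight at [t + 1]: an arrangement reached at [t + 1] comes without a swap
   if its element at [t] lies in [A] and through a swap, a bijection of the
   arrangements, if it lies in [B].  When the loop is left, the condition on
   [c] only concerns its suffix from [t].
   The second loop is the tail of a Fisher-Yates shuffle: if the weight of
   [c] depends only on its suffix from [i], after one step it depends only on
   the suffix from [i + 1], so at the end the array is uniformly shuffled.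
   Shuffling [A] and [B] independently gives exactly the starting weight with
   [t = 0] and [j = size A]. *)

From mathcomp Require Import all_boot all_order all_algebra.
From Stdlib Require Import FunctionalExtensionality.
From mathcomp Require Import zify ring.
Import GRing.Theory Num.Theory.
Set Implicit Arguments. Unset Strict Implicit. Unset Printing Implicit Defensive.
Local Open Scope ring_scope.

Definition expect {A : Type} (d : dist A) (g : A -> rat) : rat :=
  \sum_(px <- d) px.1 * g px.2.

Lemma expect_ret A (x : A) g : expect (dret x) g = g x.
Proof. by rewrite /expect big_seq1 mul1r. Qed.

Lemma expect_bind A B (d : dist A) (f : A -> dist B) g :
  expect (dbind d f) g = expect d (fun x => expect (f x) g).
Proof.
rewrite /expect big_flatten big_map; apply: eq_bigr => px _.
by rewrite big_map big_distrr; apply: eq_bigr => qy _ /=; rewrite mulrA.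
Qed.

Lemma expect_unif_list A (l : seq A) g :
  expect (unif_list l) g = (size l)%:R^-1 * \sum_(x <- l) g x.
Proof. by rewrite /expect big_map big_distrr; apply: eq_bigr => x _; rewrite div1r. Qed.

Lemma expect_flip g : expect flip g = 2^-1 * (g false + g true).
Proof. by rewrite expect_unif_list big_cons big_seq1. Qed.

Lemma prob_expect A (d : dist A) P : prob d P = expect d (fun x => (P x)%:R).
Proof.
rewrite /prob /expect big_mkcond; apply: eq_bigr => px _ /=.
by case: (P px.2); rewrite ?mulr1 ?mulr0.
Qed.

Lemma sum_nat_of_bool (I : Type) (r : seq I) (P : pred I) :
  \sum_(i <- r) ((P i)%:R : rat) = (count P r)%:R.
Proof. by rewrite -sum1_count natr_sum [RHS]big_mkcond; apply: eq_bigr => i _; case: (P i). Qed.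

Lemma sumr_const_seq (I : Type) (r : seq I) (x : rat) : \sum_(i <- r) x = (size r)%:R * x.
Proof.
elim: r => [|i r IH]; first by rewrite big_nil mul0r.
by rewrite big_cons IH /= -add1n natrD mulrDl mul1r.
Qed.

Lemma sum_mkcond_mul (I : Type) (r : seq I) (P : pred I) (F : I -> rat) :
  \sum_(i <- r | P i) F i = \sum_(i <- r) (P i)%:R * F i.
Proof. by rewrite big_mkcond; apply: eq_bigr => i _; case: (P i); rewrite ?mul1r ?mul0r. Qed.

Lemma big_involution (I : eqType) (r : seq I) (f : I -> I) (F : I -> rat) :
  uniq r -> {in r, forall i, f i \in r} -> {in r, involutive f} ->
  \sum_(i <- r) F (f i) = \sum_(i <- r) F i.
Proof.
move=> ur fr ff; rewrite -(big_map f xpredT F); apply: perm_big; apply: uniq_perm => //.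
  by rewrite (map_inj_in_uniq (can_in_inj ff)).
move=> i; apply/mapP/idP => [[j jr ->]|ir]; first exact: fr.
by exists (f i); rewrite ?fr ?ff.
Qed.

Lemma size_mem_permutations (X : eqType) (L c : seq X) :
  c \in permutations L -> size c = size L.
Proof. by rewrite mem_permutations => /perm_size. Qed.

Lemma uniq_mem_permutations (X : eqType) (L c : seq X) :
  uniq L -> c \in permutations L -> uniq c.
Proof. by move=> uL; rewrite mem_permutations => /perm_uniq ->. Qed.

Local Close Scope ring_scope.

Definition transp (a b k : nat) : nat := if k == a then b else if k == b then a else k.

Lemma transpK a b : involutive (transp a b).
Proof.
move=> k; rewrite /transp; case: (eqVneq k a) => [->|ka].
  by case: (eqVneq b a) => [->|ba]; rewrite ?eqxx.
case: (eqVneq k b) => [->|kb]; first by rewrite eqxx.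
by rewrite (negPf ka) (negPf kb).
Qed.

Lemma transp_lt a b k n : a < n -> b < n -> k < n -> transp a b k < n.
Proof. by move=> an bn kn; rewrite /transp; case: ifP => _ //; case: ifP. Qed.

Lemma transpC a b k : transp a b k = transp b a k.
Proof. by rewrite /transp; case: (eqVneq k a) => [->|_]; case: eqVneq => // ->. Qed.

Lemma transp_id a k : transp a a k = k.
Proof. by rewrite /transp; case: eqP. Qed.

Section SeqSwap.
Variables (X : eqType) (x0 : X).

Definition seq_swap (c : seq X) (a b : nat) : seq X :=
  [seq nth x0 c (transp a b k) | k <- iota 0 (size c)].

Lemma size_seq_swap c a b : size (seq_swap c a b) = size c.
Proof. by rewrite size_map size_iota. Qed.

Lemma nth_seq_swap c a b k :
  k < size c -> nth x0 (seq_swap c a b) k = nth x0 c (transp a b k).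
Proof. by move=> kc; rewrite (nth_map 0) ?size_iota // nth_iota. Qed.

Lemma seq_swapK c a b : a < size c -> b < size c -> seq_swap (seq_swap c a b) a b = c.
Proof.
move=> ac bc; apply: (@eq_from_nth _ x0); rewrite ?size_seq_swap // => k kc.
by rewrite !nth_seq_swap ?size_seq_swap ?transp_lt // transpK.
Qed.

Lemma seq_swapC c a b : seq_swap c a b = seq_swap c b a.
Proof. by apply: eq_map => k; rewrite transpC. Qed.

Lemma seq_swap_id c a : seq_swap c a a = c.
Proof.
by apply: (@eq_from_nth _ x0); rewrite ?size_seq_swap // => k kc; rewrite nth_seq_swap ?transp_id.
Qed.

Lemma perm_seq_swap c a b : a < size c -> b < size c -> perm_eq (seq_swap c a b) c.
Proof.
move=> ac bc; rewrite /seq_swap (map_comp (nth x0 c) (transp a b)).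
have cE : [seq nth x0 c j | j <- iota 0 (size c)] = c by rewrite map_nth_iota0 ?take_size.
rewrite -[X in perm_eq _ X]cE.
apply: perm_map; apply: uniq_perm; rewrite ?(map_inj_uniq (can_inj (transpK a b))) ?iota_uniq //.
move=> k; rewrite mem_iota add0n /=; apply/mapP/idP => [[j] | kc].
  by rewrite mem_iota add0n /= => jc ->; apply: transp_lt.
by exists (transp a b k); rewrite ?transpK // mem_iota add0n transp_lt.
Qed.

Lemma big_permutations_swap (L : seq X) a b (F : seq X -> rat) :
  a < size L -> b < size L ->
  (\sum_(c <- permutations L) F (seq_swap c a b) = \sum_(c <- permutations L) F c)%R.
Proof.
move=> aL bL; apply: big_involution; rewrite ?permutations_uniq // => c cL;
  rewrite -(size_mem_permutations cL) in aL bL.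
  by rewrite mem_permutations (permPl (perm_seq_swap aL bL)) -mem_permutations.
exact: seq_swapK.
Qed.

Lemma big_permutations_swap_cond (L : seq X) a b (P : pred (seq X)) (F : seq X -> rat) :
  a < size L -> b < size L ->
  (\sum_(c <- permutations L | P c) F (seq_swap c a b)
   = \sum_(c <- permutations L | P (seq_swap c a b)) F c)%R.
Proof.
move=> aL bL; rewrite (sum_mkcond_mul _ P) (sum_mkcond_mul _ (fun c => P (seq_swap c a b))).
rewrite -(big_permutations_swap _ aL bL) !big_seq.
apply: eq_bigr => c cL; rewrite -(size_mem_permutations cL) in aL bL.
by rewrite seq_swapK.
Qed.

Lemma fill_seq_swap (T : nat -> X) s c a b : a < size c -> b < size c ->
  fill T s (seq_swap c a b) = swap (fill T s c) (s + a) (s + b).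
Proof.
move=> ac bc; apply: functional_extensionality => k.
rewrite /fill /swap size_seq_swap.
have inc j : j < size c -> s <= s + j < s + size c by rewrite leq_addr ltn_add2l.
case: ifP => [/andP[sk kc] | kout]; last first.
  case: eqVneq => [ka|_]; first by rewrite ka inc in kout.
  by case: eqVneq => [kb|_] //; rewrite kb inc in kout.
have [j kE] : exists j, k = s + j by exists (k - s); rewrite subnKC.
rewrite kE ltn_add2l in kc *.
rewrite addKn (set_nth_default x0) ?size_seq_swap // nth_seq_swap // !eqn_add2l !inc // !addKn /transp.
by case: ifP => _; [|case: ifP => _]; apply: set_nth_default.
Qed.

Lemma drop_seq_swap c i m : i < size c -> m <= i ->
  drop i (seq_swap c i m) = nth x0 c m :: drop i.+1 c.
Proof.
move=> ic mi; rewrite (drop_nth x0) ?size_seq_swap // nth_seq_swap // /transp eqxx.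
congr (_ :: _); apply: (@eq_from_nth _ x0); rewrite !size_drop ?size_seq_swap // => k kc.
rewrite ltn_subRL in kc; rewrite !nth_drop nth_seq_swap //.
have [ki km] : i.+1 + k != i /\ i.+1 + k != m by split; apply/eqP; lia.
by rewrite /transp (negPf ki) (negPf km).
Qed.

End SeqSwap.

Lemma filter_notin_drop (X : eqType) (c : seq X) k :
  uniq c -> [seq x <- c | x \notin drop k c] = take k c.
Proof.
rewrite -{1 3}(cat_take_drop k c) cat_uniq => /and3P[_ disj _].
rewrite filter_cat (eq_in_filter (a2 := predT)) ?filter_predT; last first.
  by move=> x xt /=; apply/negP => xd; move/hasP: disj; apply; exists x.
by rewrite (eq_in_filter (a2 := pred0)) ?filter_pred0 ?cats0 // => x /= ->.
Qed.

Lemma big_take_permutations (X : eqType) (L c : seq X) k (F : X -> rat) :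
  uniq L -> c \in permutations L ->
  (\sum_(x <- take k c) F x = \sum_(x <- L | x \notin drop k c) F x)%R.
Proof.
move=> uL cL; rewrite -filter_notin_drop ?(uniq_mem_permutations uL) // big_filter.
by apply: perm_big; rewrite -mem_permutations.
Qed.

Local Open Scope ring_scope.

Section FisherYates.
Variables (X : eqType) (x0 : X) (T0 : nat -> X) (s : nat) (L : seq X).
Hypothesis uL : uniq L.
Local Notation N := (size L).
Variable g : (nat -> X) -> rat.

Definition shuffle_mean : rat :=
  (size (permutations L))%:R^-1 * \sum_(c <- permutations L) g (fill T0 s c).

(* A suffix [u] of length [N - i.+1] misses exactly [i.+1] elements of [L]. *)
Definition prepend_mean (i : nat) (w : seq X -> rat) (u : seq X) : rat :=
  i.+1%:R^-1 * \sum_(x <- L | x \notin u) w (x :: u).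

Lemma fisher_yates_step i (w F : seq X -> rat) : (i < N)%N ->
  \sum_(c <- permutations L) w (drop i c) *
     (i.+1%:R^-1 * \sum_(m <- iota 0 i.+1) F (seq_swap x0 c i m))
  = \sum_(c <- permutations L) prepend_mean i w (drop i.+1 c) * F c.
Proof.
move=> iN.
have swap_back m : (m < i.+1)%N ->
    \sum_(c <- permutations L) w (drop i c) * F (seq_swap x0 c i m)
  = \sum_(c <- permutations L) w (nth x0 c m :: drop i.+1 c) * F c.
  move=> mi; rewrite -(big_permutations_swap x0 _ iN (leq_trans mi iN)) !big_seq.
  apply: eq_bigr => c cL; have cN := size_mem_permutations cL.
  by rewrite seq_swapK ?drop_seq_swap ?cN // (leq_trans mi).
transitivity (i.+1%:R^-1 * \sum_(m <- iota 0 i.+1)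
    \sum_(c <- permutations L) w (drop i c) * F (seq_swap x0 c i m)).
  rewrite exchange_big big_distrr; apply: eq_bigr => c _ /=.
  by rewrite mulrCA big_distrr.
transitivity (i.+1%:R^-1 * \sum_(m <- iota 0 i.+1)
    \sum_(c <- permutations L) w (nth x0 c m :: drop i.+1 c) * F c).
  by congr (_ * _); rewrite !big_seq; apply: eq_bigr => m; rewrite mem_iota => /swap_back.
rewrite exchange_big big_distrr !big_seq; apply: eq_bigr => c cL.
rewrite -big_distrl /= mulrA -[(0 :: iota 1 i)%N]/(iota 0 i.+1); congr (_ * _ * _).
rewrite -(big_map (nth x0 c) xpredT (fun x => w (x :: drop i.+1 c))).
by rewrite map_nth_iota0 ?(size_mem_permutations cL) // (big_take_permutations _ _ uL cL).
Qed.

Lemma sum_prepend_mean i (w : seq X -> rat) : (i < N)%N ->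
  \sum_(c <- permutations L) prepend_mean i w (drop i.+1 c)
  = \sum_(c <- permutations L) w (drop i c).
Proof.
move=> iN; have := fisher_yates_step w (fun=> 1) iN.
by rewrite sumr_const_seq mulr1 size_iota mulVf ?pnatr_eq0 // -!big_distrl /= !mulr1 => ->.
Qed.

Lemma merge_loop2_step k i c : (i < N)%N -> c \in permutations L ->
  expect (merge_loop2 k.+1 s (fill T0 s c) (s + i)) g =
  i.+1%:R^-1 * \sum_(m <- iota 0 i.+1)
    expect (merge_loop2 k s (fill T0 s (seq_swap x0 c i m)) (s + i.+1)) g.
Proof.
move=> iN cL; have cN := size_mem_permutations cL.
rewrite /= expect_bind /unif_range expect_unif_list size_iota addKn; congr (_ * _).
rewrite -{1}(addn0 s) iotaDl big_map !big_seq; apply: eq_bigr => m.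
by rewrite mem_iota add0n => mi; rewrite fill_seq_swap ?cN ?addnS // (leq_trans mi).
Qed.

Lemma merge_loop2_uniform k i (w : seq X -> rat) : (i + k = N)%N ->
  \sum_(c <- permutations L) w (drop i c) * expect (merge_loop2 k s (fill T0 s c) (s + i)) g
  = (\sum_(c <- permutations L) w (drop i c)) * shuffle_mean.
Proof.
elim: k i w => [|k IH] i w.
  rewrite addn0 => ->.
  have dropN c : c \in permutations L -> drop N c = [::].
    by move=> cL; rewrite drop_oversize ?(size_mem_permutations cL).
  rewrite /shuffle_mean !big_seq.
  under eq_bigr => c cL do rewrite dropN // expect_ret.
  under [X in X * _]eq_bigr => c cL do rewrite dropN //.
  rewrite -!big_seq -big_distrr sumr_const_seq [RHS]mulrAC mulVKf; first exact: mulrC.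
  by rewrite size_permutations // pnatr_eq0 -lt0n fact_gt0.
rewrite -addSnnS => ikN; have iN : (i < N)%N by rewrite -ikN leq_addr.
rewrite big_seq; under eq_bigr => c cL do rewrite merge_loop2_step //.
rewrite -big_seq (fisher_yates_step w
  (fun c => expect (merge_loop2 k s (fill T0 s c) (s + i.+1)) g) iN).
by rewrite IH // sum_prepend_mean.
Qed.

End FisherYates.

Lemma map_fill (X : Type) (T : nat -> X) s c :
  map (fill T s c) (iota s (size c)) = c.
Proof.
have -> : iota s (size c) = map (addn s) (iota 0 (size c)) by rewrite -iotaDl addn0.
rewrite -map_comp -[RHS]take_size -(map_nth_iota0 (T s) (leqnn (size c))).
apply/eq_in_map => k; rewrite mem_iota add0n /= => kc.
by rewrite /fill leq_addr ltn_add2l kc addKn; apply: set_nth_default.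
Qed.

Lemma shuffle_mean_indicator (X : eqType) (T : nat -> X) s (L c : seq X) :
  uniq L -> perm_eq c L ->
  shuffle_mean T s L (fun T' => (map T' (iota s (size L)) == c)%:R) = (size L)`!%:R^-1.
Proof.
move=> uL cL; rewrite /shuffle_mean size_permutations // big_seq.
under eq_bigr => c' cL' do rewrite -(size_mem_permutations cL') map_fill.
rewrite -big_seq sum_nat_of_bool (count_uniq_mem _ (permutations_uniq L)).
by rewrite mem_permutations cL mulr1.
Qed.

Local Close Scope ring_scope.

Section Layout.
Variables (X : eqType) (x0 : X) (A B : seq X).

Lemma drop_swap_last c t j : t <= j < size c ->
  drop j (seq_swap x0 c t j) = nth x0 c t :: drop j.+1 c.
Proof. by case/andP=> tj jc; rewrite seq_swapC drop_seq_swap. Qed.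

Lemma drop_take_swap_first c t j : t < j < size c ->
  drop t (take j (seq_swap x0 c t j)) = nth x0 c j :: drop t.+1 (take j c).
Proof.
case/andP=> tj jc; have tc := ltn_trans tj jc.
have sizej d : size d = size c -> size (take j d) = j by move=> dc; rewrite size_takel // dc ltnW.
rewrite (drop_nth x0) ?sizej ?size_seq_swap // nth_take // nth_seq_swap // /transp eqxx.
congr (_ :: _); apply: (@eq_from_nth _ x0); rewrite !size_drop !sizej ?size_seq_swap // => k kj.
rewrite ltn_subRL in kj; rewrite !nth_drop !nth_take // nth_seq_swap ?(ltn_trans kj) //.
have [kt kj'] : t.+1 + k != t /\ t.+1 + k != j by split; apply/eqP; lia.
by rewrite /transp (negPf kt) (negPf kj').
Qed.

(* The invariant of the first loop of Merge, for cursors [s + t] and [s + j]. *)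
Definition layout (t j : nat) (c : seq X) : bool :=
  all (fun x => x \in A) (drop t (take j c)) && all (fun x => x \in B) (drop j c).

Lemma layout_diag t c : layout t t c = all (fun x => x \in B) (drop t c).
Proof. by rewrite /layout drop_oversize // size_take_min geq_minl. Qed.

Lemma layout_full t c : layout t (size c) c = all (fun x => x \in A) (drop t c).
Proof. by rewrite /layout take_size drop_size andbT. Qed.

Lemma layout_next t j c : t < j <= size c ->
  layout t j c = (nth x0 c t \in A) && layout t.+1 j c.
Proof.
case/andP=> tj jc; rewrite /layout (drop_nth x0) ?size_takel //.
by rewrite /= nth_take // andbA.
Qed.

Lemma layout_swap t j c : t <= j < size c ->
  layout t j (seq_swap x0 c t j) = (nth x0 c t \in B) && layout t.+1 j.+1 c.
Proof.
case/andP; rewrite leq_eqVlt => /orP[/eqP<- | tj] jc.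
  by rewrite seq_swap_id !layout_diag (drop_nth x0).
have tj' := ltnW tj; have jc' := ltnW jc.
rewrite /layout drop_take_swap_first ?tj // drop_swap_last ?tj' //.
rewrite (take_nth x0 jc) drop_rcons ?size_takel // all_rcons /=.
by case: (nth x0 c j \in A); case: (nth x0 c t \in B); rewrite ?andbF.
Qed.

End Layout.

Local Open Scope ring_scope.

Lemma merge_loop1_mass (X : Type) f n (T : nat -> X) i j :
  expect (merge_loop1 f n T i j) (fun=> 1) = 1.
Proof.
elim: f T i j => [|f IH] T i j /=; first by rewrite expect_ret.
by rewrite expect_bind expect_flip; do 2!case: ifP => _; rewrite ?expect_ret ?IH -mulr2n mulVf.
Qed.

Section FirstLoop.
Variables (X : eqType) (x0 : X) (T0 : nat -> X) (s : nat) (A B : seq X).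
Hypothesis uAB : uniq (A ++ B).
Local Notation L := (A ++ B).
Local Notation N := (size (A ++ B)).
Local Notation layout := (layout A B).

Definition loop1_expect f t j c (h : (nat -> X) * nat -> rat) : rat :=
  expect (merge_loop1 f (s + N) (fill T0 s c) (s + t) (s + j)) h.

Definition loop1_sum f t h : rat :=
  \sum_(j <- iota t (N.+1 - t)) \sum_(c <- permutations L | layout t j c) loop1_expect f t j c h.

Definition break_sum t j (h : (nat -> X) * nat -> rat) : rat :=
  \sum_(c <- permutations L | layout t j c) h (fill T0 s c, s + t)%N.

Lemma loop1_expect_step f t j c h : (t <= j <= N)%N -> size c = N ->
  loop1_expect f.+1 t j c h = 2^-1 *
   ((if t == j then h (fill T0 s c, s + t)%N else loop1_expect f t.+1 j c h) +
    (if j == N then h (fill T0 s c, s + t)%N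
     else loop1_expect f t.+1 j.+1 (seq_swap x0 c t j) h)).
Proof.
case/andP=> tj jN cN; rewrite /loop1_expect /= expect_bind expect_flip /= !eqn_add2l.
congr (_ * (_ + _)); first by case: ifP => _; rewrite ?expect_ret // addnS.
case: eqVneq => [_|jN']; first by rewrite expect_ret.
have jc : (j < size c)%N by rewrite cN ltn_neqAle jN' jN.
by rewrite fill_seq_swap ?(leq_ltn_trans tj) // !addnS.
Qed.

Lemma nth_in_B c t : c \in permutations L -> (t < N)%N ->
  (nth x0 c t \in B) = (nth x0 c t \notin A).
Proof.
move=> cL tN; have : nth x0 c t \in L.
  by rewrite -(perm_mem (_ : perm_eq c L)) -?mem_permutations // mem_nth ?(size_mem_permutations cL).
move: uAB; rewrite cat_uniq mem_cat => /and3P[_ disj _].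
case: (boolP (nth x0 c t \in A)) => //= xA _.
by apply/negP => xB; move/hasP: disj; apply; exists (nth x0 c t).
Qed.

Lemma sum_layout_succ t (F : nat -> seq X -> rat) :
  \sum_(j <- iota t.+1 (N - t)) \sum_(c <- permutations L | layout t j c) F j c +
  \sum_(j <- iota t (N - t)) \sum_(c <- permutations L | layout t j (seq_swap x0 c t j)) F j.+1 c
  = \sum_(j <- iota t.+1 (N - t)) \sum_(c <- permutations L | layout t.+1 j c) F j c.
Proof.
rewrite -add1n iotaDl !big_map -big_split !big_seq; apply: eq_bigr => j.
rewrite mem_iota add1n -maxnE leq_max ltnNge => /andP[tj]; rewrite tj /= => jN.
rewrite (sum_mkcond_mul _ (layout t j.+1)) (sum_mkcond_mul _ (layout t.+1 j.+1)).
rewrite (sum_mkcond_mul _ (fun c => layout t j (seq_swap x0 c t j))) -big_split !big_seq.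
apply: eq_bigr => c cL /=.
have cN := size_mem_permutations cL.
have next : (t < j.+1 <= size c)%N by rewrite ltnS tj cN.
have swp : (t <= j < size c)%N by rewrite tj cN.
have tN : (t < N)%N := leq_ltn_trans tj jN.
rewrite -mulrDl (layout_next x0 A B next) (layout_swap x0 A B swp) (nth_in_B cL tN).
by case: (nth x0 c t \in A); case: (layout t.+1 j.+1 c); rewrite /= ?add0r ?addr0.
Qed.

Lemma sum_layout_break_left t (H : seq X -> rat) (G : nat -> seq X -> rat) :
  \sum_(j <- iota t (N - t).+1) \sum_(c <- permutations L | layout t j c)
     (if t == j then H c else G j c)
  = \sum_(c <- permutations L | layout t t c) H c +
    \sum_(j <- iota t.+1 (N - t)) \sum_(c <- permutations L | layout t j c) G j c.
Proof.
rewrite big_cons eqxx; congr (_ + _); rewrite !big_seq; apply: eq_bigr => j.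
by rewrite mem_iota => /andP[tj _]; rewrite ltn_eqF.
Qed.

Lemma sum_layout_break_right t (H : seq X -> rat) (G : nat -> seq X -> rat) : (t <= N)%N ->
  \sum_(j <- iota t (N - t).+1) \sum_(c <- permutations L | layout t j c)
     (if j == N then H c else G j c)
  = \sum_(j <- iota t (N - t)) \sum_(c <- permutations L | layout t j c) G j c +
    \sum_(c <- permutations L | layout t N c) H c.
Proof.
move=> tN; rewrite -addn1 iotaD subnKC // big_cat big_seq1 eqxx; congr (_ + _).
rewrite !big_seq; apply: eq_bigr => j.
by rewrite mem_iota subnKC // => /andP[_ jN]; rewrite ltn_eqF.
Qed.

Lemma loop1_sum_step f t h : (t <= N)%N ->
  loop1_sum f.+1 t h = 2^-1 * (break_sum t t h + break_sum t N h + loop1_sum f t.+1 h).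
Proof.
move=> tN; rewrite /loop1_sum subSS subSn //.
transitivity (2^-1 *
  (\sum_(j <- iota t (N - t).+1) \sum_(c <- permutations L | layout t j c)
     (if t == j then h (fill T0 s c, s + t)%N else loop1_expect f t.+1 j c h) +
   \sum_(j <- iota t (N - t).+1) \sum_(c <- permutations L | layout t j c)
     (if j == N then h (fill T0 s c, s + t)%N
      else loop1_expect f t.+1 j.+1 (seq_swap x0 c t j) h))).
  rewrite -big_split big_distrr !big_seq; apply: eq_bigr => j.
  rewrite mem_iota addnS subnKC // ltnS => tjN.
  rewrite -big_split big_distrr big_seq_cond [RHS]big_seq_cond; apply: eq_bigr => c /andP[cL _].
  exact: loop1_expect_step (size_mem_permutations cL).
rewrite sum_layout_break_left sum_layout_break_right //.
have swap_back : \sum_(j <- iota t (N - t)) \sum_(c <- permutations L | layout t j c)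
      loop1_expect f t.+1 j.+1 (seq_swap x0 c t j) h
  = \sum_(j <- iota t (N - t)) \sum_(c <- permutations L | layout t j (seq_swap x0 c t j))
      loop1_expect f t.+1 j.+1 c h.
  rewrite !big_seq; apply: eq_bigr => j; rewrite mem_iota subnKC // => /andP[tj jN].
  exact: big_permutations_swap_cond (leq_ltn_trans tj jN) jN.
rewrite swap_back /break_sum -(sum_layout_succ t (fun j c => loop1_expect f t.+1 j c h)).
by ring.
Qed.

Variable g : (nat -> X) -> rat.

Definition loop2_expect (Ti : (nat -> X) * nat) : rat :=
  expect (merge_loop2 (s + N - Ti.2) s Ti.1 Ti.2) g.

Lemma sum_loop2_expect t (P p : pred (seq X)) : (t <= N)%N ->
  {in permutations L, forall c, P c = p (drop t c)} ->
  \sum_(c <- permutations L | P c) loop2_expect (fill T0 s c, s + t)%N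
  = (\sum_(c <- permutations L | P c) 1) * shuffle_mean T0 s L g.
Proof.
move=> tN Pp; rewrite (sum_mkcond_mul _ P) [in RHS](sum_mkcond_mul _ P) !big_seq.
under eq_bigr => c cL do rewrite Pp // /loop2_expect /= subnDl.
under [in RHS]eq_bigr => c cL do rewrite Pp // mulr1.
by rewrite -!big_seq (merge_loop2_uniform x0 T0 s uAB g (fun w => (p w)%:R)) // subnKC.
Qed.

Lemma loop1_sum_uniform f t : (N.+1 - t <= f)%N ->
  loop1_sum f t loop2_expect = loop1_sum f t (fun=> 1) * shuffle_mean T0 s L g.
Proof.
elim: f t => [|f IH] t tf; first by rewrite leqn0 in tf; rewrite /loop1_sum (eqP tf) !big_nil mul0r.
have [tN | Nt] := leqP t N; last first.
  by rewrite /loop1_sum (_ : N.+1 - t = 0)%N ?big_nil ?mul0r //; apply/eqP; rewrite subn_eq0.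
rewrite subSn // ltnS -subSS in tf.
rewrite !loop1_sum_step // IH // /break_sum.
rewrite (sum_loop2_expect (p := all (fun x => x \in B)) tN); last by move=> c _; rewrite layout_diag.
rewrite (sum_loop2_expect (p := all (fun x => x \in A)) tN); last first.
  by move=> c cL; rewrite -(size_mem_permutations cL) layout_full.
by rewrite -!mulrDl mulrA.
Qed.

End FirstLoop.

Section ShuffledMerge.
Variables (X : eqType) (x0 : X) (T0 : nat -> X) (s : nat) (A B : seq X).
Hypothesis uAB : uniq (A ++ B).
Local Notation L := (A ++ B).
Local Notation N := (size (A ++ B)).
Local Notation layout := (layout A B).

Let uA : uniq A. Proof. by move: uAB; rewrite cat_uniq => /and3P[]. Qed.
Let uB : uniq B. Proof. by move: uAB; rewrite cat_uniq => /and3P[]. Qed.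
Let disjAB x : x \in A -> x \in B -> False.
Proof. by move: uAB; rewrite cat_uniq => /and3P[_ /hasPn disj _] xA /disj; rewrite xA. Qed.

Lemma mem_permutations_cat c :
  (c \in permutations L) && layout 0 (size A) c =
  (take (size A) c \in permutations A) && (drop (size A) c \in permutations B).
Proof.
rewrite /layout drop0 !mem_permutations.
apply/and3P/andP => [[cL /allP inA /allP inB] | [tA dB]]; last first.
  split; first by rewrite -(cat_take_drop (size A) c) perm_cat.
    by apply/allP => x; rewrite (perm_mem tA).
  by apply/allP => x; rewrite (perm_mem dB).
have uc : uniq c by rewrite (perm_uniq cL).
have split_mem x : x \in L -> (x \in take (size A) c) || (x \in drop (size A) c).
  by rewrite -mem_cat cat_take_drop (perm_mem cL).
split; apply: uniq_perm; rewrite ?take_uniq ?drop_uniq // => x; apply/idP/idP.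
- exact: inA.
- move=> xA; have /split_mem/orP[// | /inB /(disjAB xA) []] : x \in L by rewrite mem_cat xA.
- exact: inB.
- move=> xB; have /split_mem/orP[/inA /disjAB /(_ xB) [] | //] : x \in L by rewrite mem_cat xB orbT.
Qed.

Lemma sum_permutations_cat (F : seq X -> rat) :
  \sum_(a <- permutations A) \sum_(b <- permutations B) F (a ++ b)
  = \sum_(c <- permutations L | layout 0 (size A) c) F c.
Proof.
rewrite -[RHS]big_filter -(big_allpairs_dep (h := cat) (r2 := fun=> permutations B)).
apply: perm_big; apply: uniq_perm; rewrite ?filter_uniq ?permutations_uniq //.
  apply: allpairs_uniq_dep; rewrite ?permutations_uniq // => -[a b] [a' b'] /=.
  move=> /allpairsPdep[a1 [b1 [aA _ [-> ->]]]] /allpairsPdep[a2 [b2 [aA' _ [-> ->]]]] /=.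
  by move/eqP; rewrite eqseq_cat ?(size_mem_permutations aA) ?(size_mem_permutations aA') //;
    case/andP => /eqP-> /eqP->.
move=> c; rewrite mem_filter andbC mem_permutations_cat; apply/allpairsPdep/andP.
  by case=> a [b [aA bB ->]]; rewrite take_size_cat ?drop_size_cat ?(size_mem_permutations aA).
by case=> tA dB; exists (take (size A) c), (drop (size A) c); rewrite cat_take_drop.
Qed.

Lemma layout_start c j : c \in permutations L -> (j <= N)%N -> layout 0 j c -> j = size A.
Proof.
move=> cL jN; rewrite /layout drop0 => /andP[/allP inA /allP inB].
have uc := uniq_mem_permutations uAB cL; have cN := size_mem_permutations cL.
have := uniq_leq_size (take_uniq j uc) inA; rewrite size_takel ?cN // => jA.
have := uniq_leq_size (drop_uniq j uc) inB.
rewrite size_drop cN leq_subLR size_cat leq_add2r => Aj.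
by apply/eqP; rewrite eqn_leq jA.
Qed.

Lemma loop1_sum_start f h :
  loop1_sum T0 s A B f 0 h
  = \sum_(c <- permutations L | layout 0 (size A) c) loop1_expect T0 s A B f 0 (size A) c h.
Proof.
have Ain : size A \in iota 0 N.+1 by rewrite mem_iota ltnS size_cat leq_addr.
rewrite /loop1_sum subn0 (bigD1_seq _ Ain (iota_uniq _ _)) /= -[(0 :: iota 1 N)%N]/(iota 0 N.+1).
rewrite [X in _ + X]big1_seq ?addr0 // => j /andP[jA].
rewrite mem_iota ltnS => jN; rewrite big1_seq // => c /andP[lay cL].
by rewrite (layout_start cL jN lay) eqxx in jA.
Qed.

Lemma expect_shuffled_merge g :
  expect (shuffled_merge T0 s A B) g = shuffle_mean T0 s L g.
Proof.
have perm_ne0 (l : seq X) : uniq l -> (size (permutations l))%:R != 0 :> rat.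
  by move=> ul; rewrite size_permutations // pnatr_eq0 -lt0n fact_gt0.
have merge_expect c : expect (Merge (fill T0 s c) s (size A) (size B)) g
    = loop1_expect T0 s A B N.+1 0 (size A) c (loop2_expect s A B g).
  by rewrite /Merge /loop1_expect /loop2_expect expect_bind size_cat addn0 addnA.
have mass : \sum_(c <- permutations L | layout 0 (size A) c)
    loop1_expect T0 s A B N.+1 0 (size A) c (fun=> 1)
    = (size (permutations A))%:R * (size (permutations B))%:R.
  under eq_bigr do rewrite /loop1_expect merge_loop1_mass.
  rewrite -(sum_permutations_cat (fun=> 1)).
  by under eq_bigr do rewrite sumr_const_seq mulr1; rewrite sumr_const_seq.
rewrite /shuffled_merge expect_bind expect_unif_list.
under eq_bigr do rewrite expect_bind expect_unif_list.
under eq_bigr do under eq_bigr do rewrite merge_expect.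
rewrite -big_distrr (sum_permutations_cat (fun c => loop1_expect T0 s A B N.+1 0 (size A) c
  (loop2_expect s A B g))) -loop1_sum_start.
rewrite (loop1_sum_uniform x0 T0 s uAB g) ?subn0 // loop1_sum_start mass.
by rewrite /=; field; rewrite !perm_ne0.
Qed.

End ShuffledMerge.

Unset Implicit Arguments. Set Strict Implicit.
Theorem mainTheorem1 (X : eqType) (T : nat -> X) (s : nat) (A B : seq X)
  (hAB : uniq (A ++ B)) (c : seq X) (hc : perm_eq c (A ++ B)) :
  prob (shuffled_merge T s A B)
       (fun T' => map T' (iota s (size A + size B)) == c)
  = 1 / ((size A + size B)`!)%:R.
Proof.
rewrite prob_expect (expect_shuffled_merge (T 0) T s hAB) -size_cat div1r.
exact: shuffle_mean_indicator.
Qed.
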